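(* Let $P=\{x\in\mathbb R^n : Ax=b,\ Bx\le d\}$ with $A\in\mathbb R^{m_A\times n}$, $B\in\mathbb R^{m_B\times n}$ be a pointed polyhedron and let $x_1,x_2$ be distinct points of $P$. Set $u:=x_2-x_1$ and let $C_{A,B,u}$ be the intersection of the cone $\{(x,y^+,y^-)\in\mathbb R^{n+2m_B} : Ax=0,\ Bx=y^+-y^-,\ y^+,y^-\ge 0\}$ with the hyperplanes $y^-_i=0$ for each $i$ with $(Bu)_i\ge 0$ and $y^+_i=0$ for each $i$ with $(Bu)_i\le 0$. Then for every extreme ray $(g,y^+,y^-)$ of $C_{A,B,u}$, the vector $g$ (which is a circuit direction of $P$ sign-compatible with $u$ with respect to $B$) is a strictly feasible direction at $x_1$ in $P$.
   Context: $P$ is pointed means $\operatorname{rank}\binom{A}{B}=n$. The circuits of $P$ are the $g\in\ker(A)\setminus\{0\}$ (normalized to coprime integer components) for which no $x\in\ker(A)\setminus\{0\}$ satisfies $\operatorname{supp}(Bx)\subsetneq\operatorname{supp}(Bg)$; a circuit direction is a positive multiple of a circuit. Vectors $x,y$ are sign-compatible with respect to $B$ if $(Bx)_i(By)_i\ge0$ for all $i$. A direction $g$ is strictly feasible at $x_1\in P$ if $x_1+\alpha g\in P$ for some $\alpha>0$. *)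

From HB Require Import structures.
From mathcomp Require Import all_boot all_order all_algebra.
Set Implicit Arguments. Unset Strict Implicit. Unset Printing Implicit Defensive.
Import Order.TTheory GRing.Theory Num.Theory.
Local Open Scope ring_scope.

Definition in_poly (R : realFieldType) (n mA mB : nat)
  (A : 'M[R]_(mA, n)) (b : 'cV[R]_mA) (B : 'M[R]_(mB, n)) (d : 'cV[R]_mB)
  (x : 'cV[R]_n) : Prop :=
  A *m x = b /\ forall i : 'I_mB, (B *m x) i 0 <= d i 0.

Definition pointed (R : realFieldType) (n mA mB : nat)
  (A : 'M[R]_(mA, n)) (B : 'M[R]_(mB, n)) : Prop :=
  \rank (col_mx A B) = n.

Definition cone_ABu (R : realFieldType) (n mA mB : nat)
  (A : 'M[R]_(mA, n)) (B : 'M[R]_(mB, n)) (u : 'cV[R]_n)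
  (z : 'cV[R]_n * 'cV[R]_mB * 'cV[R]_mB) : Prop :=
  let: (x, yp, ym) := z in
  [/\ A *m x = 0, B *m x = yp - ym,
      (forall i : 'I_mB, 0 <= yp i 0 /\ 0 <= ym i 0),
      (forall i : 'I_mB, 0 <= (B *m u) i 0 -> ym i 0 = 0) &
      (forall i : 'I_mB, (B *m u) i 0 <= 0 -> yp i 0 = 0)].

Definition extreme_ray (R : realFieldType) (V : lmodType R) (C : V -> Prop)
  (r : V) : Prop :=
  [/\ C r, r != 0 &
      forall v w : V, C v -> C w -> r = v + w ->
        exists2 l : R, 0 <= l & v = l *: r].

Definition strictly_feasible (R : realFieldType) (n mA mB : nat)
  (A : 'M[R]_(mA, n)) (b : 'cV[R]_mA) (B : 'M[R]_(mB, n)) (d : 'cV[R]_mB)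
  (x1 g : 'cV[R]_n) : Prop :=
  exists2 alpha : R, 0 < alpha & in_poly A b B d (x1 + alpha *: g).

From HB Require Import structures.
From mathcomp Require Import all_boot all_order all_algebra.
Set Implicit Arguments. Unset Strict Implicit. Unset Printing Implicit Defensive.
Import Order.TTheory GRing.Theory Num.Theory.
Local Open Scope ring_scope.

(* Moving from [x1] along [g] therefore only raises constraints with positive
   slack, and a small enough step stays in P. *)

Lemma fin_small_pos (R : realDomainType) (I : finType) (P : I -> R -> Prop) :
  (forall i, exists2 e, 0 < e & forall a, 0 < a -> a <= e -> P i a) ->
  exists2 e, 0 < e & forall a, 0 < a -> a <= e -> forall i, P i a.
Proof.
move=> Psmall.
suff [e e0 He] : exists2 e, 0 < e &
    forall a, 0 < a -> a <= e -> forall i, i \in enum I -> P i a.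
  by exists e => // a a0 ae i; apply: He; rewrite ?mem_enum.
elim: (enum I) => [|j s [e e0 He]]; first by exists 1.
have [c c0 Hc] := Psmall j.
exists (Num.min e c) => [|a a0]; first by rewrite lt_min e0 c0.
rewrite le_min => /andP[ae ac] i; rewrite inE => /predU1P[-> | i_s].
  exact: Hc.
exact: He.
Qed.

Lemma small_step_le (R : realFieldType) (x c d : R) :
  x <= d -> (0 < c -> x < d) ->
  exists2 e, 0 < e & forall a : R, 0 < a -> a <= e -> x + a * c <= d.
Proof.
move=> xd slack; have [c0 | cle0] := ltP 0 c.
  exists ((d - x) / c) => [|a _ ae]; first by rewrite divr_gt0 ?subr_gt0 ?slack.
  by rewrite -lerBrDl -ler_pdivlMr.
exists 1 => // a a0 _; apply: le_trans _ xd.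
by rewrite gerDl (mulr_ge0_le0 (ltW a0)).
Qed.

Section FeasibleDirection.

Variables (R : realFieldType) (n mA mB : nat).
Variables (A : 'M[R]_(mA, n)) (b : 'cV[R]_mA) (B : 'M[R]_(mB, n)) (d : 'cV[R]_mB).

Lemma strictly_feasible_slack (x1 g : 'cV[R]_n) :
  in_poly A b B d x1 -> A *m g = 0 ->
  (forall i, 0 < (B *m g) i 0 -> (B *m x1) i 0 < d i 0) ->
  strictly_feasible A b B d x1 g.
Proof.
move=> [Ax1 Bx1] Ag slack.
have [e e0 He] := fin_small_pos (fun i => small_step_le (Bx1 i) (slack i)).
exists e => //; split; first by rewrite mulmxDr -scalemxAr Ag scaler0 addr0 Ax1.
by move=> i; rewrite mulmxDr -scalemxAr mxE [X in _ + X]mxE; apply: He.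
Qed.

Lemma slack_of_increase (x1 x2 : 'cV[R]_n) (i : 'I_mB) :
  in_poly A b B d x2 -> 0 < (B *m (x2 - x1)) i 0 -> (B *m x1) i 0 < d i 0.
Proof.
move=> [_ Bx2]; rewrite mulmxBr mxE [X in _ + X]mxE subr_gt0 => lt12.
exact: lt_le_trans lt12 (Bx2 i).
Qed.

Lemma cone_ABu_pos (u g : 'cV[R]_n) (yp ym : 'cV[R]_mB) (i : 'I_mB) :
  cone_ABu A B u (g, yp, ym) -> 0 < (B *m g) i 0 -> 0 < (B *m u) i 0.
Proof.
move=> [_ Bg ge0 _ yp0] gi; rewrite ltNge; apply/negP => /yp0 ypi.
have [_ ymi] := ge0 i.
by move: gi; rewrite Bg mxE [X in _ + X]mxE ypi sub0r oppr_gt0 ltNge ymi.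
Qed.

End FeasibleDirection.

Theorem corollary4 (R : realFieldType) (n mA mB : nat)
  (A : 'M[R]_(mA, n)) (b : 'cV[R]_mA) (B : 'M[R]_(mB, n)) (d : 'cV[R]_mB)
  (x1 x2 : 'cV[R]_n) :
  pointed A B ->
  in_poly A b B d x1 -> in_poly A b B d x2 -> x1 != x2 ->
  forall (g : 'cV[R]_n) (yp ym : 'cV[R]_mB),
    extreme_ray (cone_ABu A B (x2 - x1)) (g, yp, ym) ->
    strictly_feasible A b B d x1 g.
Proof.
move=> _ Px1 Px2 _ g yp ym [Cg _ _].
apply: strictly_feasible_slack => // [|i gi]; first by case: Cg.
exact: slack_of_increase Px2 (cone_ABu_pos Cg gi).
Qed.
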